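(* Let $A\in\mathbb{C}^{m\times m}$ and $C\in\mathbb{C}^{n\times n}$ be nonsingular, $B\in\mathbb{C}^{m\times n}$, and $M=ABC$. Then: (e) For each type $\tau\in\{(1),(1,2),(1,4),(1,2,4)\}$ there exists $G\in\{B^{\tau}\}$ with $M^*MC^{-1}GA^{-1}=M^*$. (f) For each type $\tau\in\{(1),(1,2),(1,4),(1,2,4)\}$: $M^*MC^{-1}GA^{-1}=M^*$ holds for all $G\in\{B^{\tau}\}$ if and only if $B=0$ or $r(B)=m$. (g) For each type $\tau\in\{(1,3),(1,2,3),(1,3,4)\}$: $M^*MC^{-1}GA^{-1}=M^*$ holds for all (equivalently, for some) $G\in\{B^{\tau}\}$ if and only if $\mathscr{R}(A^*AB)=\mathscr{R}(B)$; likewise $M^*MC^{-1}B^\dagger A^{-1}=M^*$ if and only if $\mathscr{R}(A^*AB)=\mathscr{R}(B)$. (h) For each type $\tau\in\{(1),(1,2),(1,4),(1,2,4)\}$: $B^*BCHA=B^*$ holds for all $H\in\{M^{\tau}\}$ if and only if $B=0$ or $r(B)=m$. (i) For each type $\tau\in\{(1,3),(1,2,3),(1,3,4)\}$: $B^*BCHA=B^*$ holds for all $H\in\{M^{\tau}\}$ if and only if $\mathscr{R}(A^*AB)=\mathscr{R}(B)$; likewise $B^*BCM^\dagger A=B^*$ if and only if $\mathscr{R}(A^*AB)=\mathscr{R}(B)$.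
   Context: For a complex matrix $X$, $X^*$ is its conjugate transpose, $r(X)$ its rank and $\mathscr{R}(X)$ its column space. For $X\in\mathbb{C}^{p\times q}$, a matrix $G\in\mathbb{C}^{q\times p}$ is called an $\{i,\ldots,j\}$-generalized inverse of $X$ (written $X^{(i,\ldots,j)}$) if it satisfies the equations numbered $i,\ldots,j$ among the four Penrose equations (i) $XGX=X$, (ii) $GXG=G$, (iii) $(XG)^*=XG$, (iv) $(GX)^*=GX$; $\{X^{(i,\ldots,j)}\}$ denotes the set of all such $G$. The Moore–Penrose inverse $X^\dagger$ is the unique matrix satisfying all four equations. *)

(* Complex matrices are modelled over an arbitrary
   numClosedFieldType R (e.g. algC), with Num.conj as complex conjugation. *)
From HB Require Import structures.
From mathcomp Require Import all_boot all_order all_algebra.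
Set Implicit Arguments. Unset Strict Implicit. Unset Printing Implicit Defensive.
Import Order.TTheory GRing.Theory Num.Theory.
Local Open Scope ring_scope.

Definition ctrmx (R : numClosedFieldType) (p q : nat) (X : 'M[R]_(p, q)) : 'M[R]_(q, p) :=
  (map_mx Num.conj X)^T.

Definition penrose (R : numClosedFieldType) (p q : nat)
  (X : 'M[R]_(p, q)) (G : 'M[R]_(q, p)) (i : nat) : Prop :=
  match i with
  | 1%N => X *m G *m X = X
  | 2%N => G *m X *m G = G
  | 3%N => ctrmx (X *m G) = X *m G
  | 4%N => ctrmx (G *m X) = G *m X
  | _ => True
  end.

Definition is_ginv (R : numClosedFieldType) (p q : nat)
  (X : 'M[R]_(p, q)) (G : 'M[R]_(q, p)) (tau : seq nat) : Prop :=
  forall i, i \in tau -> penrose X G i.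

Definition is_MP (R : numClosedFieldType) (p q : nat)
  (X : 'M[R]_(p, q)) (G : 'M[R]_(q, p)) : Prop :=
  is_ginv X G [:: 1; 2; 3; 4]%N.

Definition colspace_eq (R : numClosedFieldType) (p q r : nat)
  (X : 'M[R]_(p, q)) (Y : 'M[R]_(p, r)) : Prop :=
  (X^T == Y^T)%MS.

(* Put V = A^*AB and W = A^-* B.  Then M^*MC^-1 G A^-1 = M^* amounts to
   V^* (B G) = V^*, and B^*BCHA = B^* to W^* (M H) = W^*.  For a
   {1,3}-inverse G of X, XG is the orthogonal projector onto R(X), so
   V^* (X G) = V^* iff R(V) is contained in R(X); with A, C nonsingular both
   inclusions say R(A^*AB) = R(B).  Without equation (3), the {1,2,4}-inverses
   G0 + G0 X Z (I - X G0) move X G far enough to violate V^* (X G) = V^*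
   unless V = 0 or I - X G0 = 0, i.e. X has full row rank. *)

From HB Require Import structures.
From mathcomp Require Import all_boot all_order all_algebra.
From Stdlib Require Import Setoid.
Set Implicit Arguments.
Unset Strict Implicit.
Unset Printing Implicit Defensive.
Import Order.TTheory GRing.Theory Num.Theory.
Local Open Scope ring_scope.

Section ConjugateTranspose.
Variable R : numClosedFieldType.

Lemma ctrmxK p q (X : 'M[R]_(p, q)) : ctrmx (ctrmx X) = X.
Proof. by apply/matrixP=> i j; rewrite /ctrmx !mxE conjCK. Qed.

Lemma ctrmx_mul p q r (X : 'M[R]_(p, q)) (Y : 'M[R]_(q, r)) :
  ctrmx (X *m Y) = ctrmx Y *m ctrmx X.
Proof. by rewrite /ctrmx map_mxM trmx_mul. Qed.

Lemma ctrmx0 p q : ctrmx (0 : 'M[R]_(p, q)) = 0.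
Proof. by rewrite /ctrmx map_mx0 trmx0. Qed.

Lemma unitmx_ctrmx p (A : 'M[R]_p) : (ctrmx A \in unitmx) = (A \in unitmx).
Proof. by rewrite /ctrmx unitmx_tr map_unitmx. Qed.

Lemma ctrmx_inv p (A : 'M[R]_p) : ctrmx (invmx A) = invmx (ctrmx A).
Proof. by rewrite /ctrmx map_invmx trmx_inv. Qed.

Lemma gram_mx_eq0 p q (X : 'M[R]_(p, q)) : ctrmx X *m X = 0 -> X = 0.
Proof.
(* The j-th diagonal entry of X^* X is the sum of the |X i j|^2. *)
move=> XX0; apply/matrixP=> i j; rewrite mxE.
have /matrixP/(_ j j)/eqP := XX0; rewrite !mxE psumr_eq0 => [|k _]; last first.
  by rewrite /ctrmx !mxE mulrC mul_conjC_ge0.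
move/allP/(_ i (mem_index_enum _))/implyP/(_ isT).
by rewrite /ctrmx !mxE mulrC mul_conjC_eq0 => /eqP.
Qed.

End ConjugateTranspose.

Lemma exists_mulmx_neq0 (R : fieldType) r q p s
    (U : 'M[R]_(r, q)) (Y : 'M[R]_(p, s)) :
  U != 0 -> Y != 0 -> exists Z : 'M[R]_(q, p), U *m Z *m Y != 0.
Proof.
have entry_neq0 a b (W : 'M[R]_(a, b)) : W != 0 -> exists k i, W k i != 0.
  move=> nzW; have : ~~ [forall k, forall i, W k i == 0].
    apply: contra nzW => /forallP W0; apply/eqP/matrixP=> k i.
    by rewrite mxE; apply/eqP/(forallP (W0 k)).
  rewrite negb_forall => /existsP[k]; rewrite negb_forall => /existsP[i].
  by exists k, i.
move=> /entry_neq0[k [i Uki]] /entry_neq0[j [l Yjl]].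
(* The (k, l) entry of U *m delta_mx i j *m Y is U k i * Y j l. *)
exists (delta_mx i j); apply/eqP => /matrixP/(_ k l)/eqP.
rewrite -(mul_delta_mx (0 : 'I_1)) mulmxA -colE -mulmxA -rowE.
rewrite !mxE big_ord1 !mxE.
by rewrite mulf_eq0 (negPf Uki) (negPf Yjl).
Qed.

Lemma mulmx_unitr_eq (R : comUnitRingType) r n
    (W : 'M[R]_n) (X Y : 'M[R]_(r, n)) :
  W \in unitmx -> X *m W = Y *m W <-> X = Y.
Proof.
by move=> hW; split=> [/(congr1 (mulmx^~ (invmx W)))|->]; rewrite ?mulmxK.
Qed.

Lemma mulmx_unitl_eq (R : comUnitRingType) m r
    (U : 'M[R]_m) (X Y : 'M[R]_(m, r)) :
  U \in unitmx -> U *m X = U *m Y <-> X = Y.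
Proof.
by move=> hU; split=> [/(congr1 (mulmx (invmx U)))|->]; rewrite ?mulKmx.
Qed.

Section GeneralizedInverses.
Variables (R : numClosedFieldType) (p q : nat) (X : 'M[R]_(p, q)).

Lemma is_ginv_sub (G : 'M[R]_(q, p)) (tau tau' : seq nat) :
  {subset tau <= tau'} -> is_ginv X G tau' -> is_ginv X G tau.
Proof. by move=> sub hG i /sub /hG. Qed.

Lemma mul_pinv_gram : X *m pinvmx (ctrmx X *m X) *m (ctrmx X *m X) = X.
Proof.
set S := ctrmx X *m X; set E := X *m (1%:M - pinvmx S *m S).
have XE0 : ctrmx X *m E = 0.
  by rewrite /E mulmxA mulmxBr mulmx1 mulmxA -/S mulmxKpV ?subrr.
have /gram_mx_eq0 : ctrmx E *m E = 0.
  by rewrite {2}/E ctrmx_mul -mulmxA XE0 mulmx0.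
by rewrite /E mulmxBr mulmx1 mulmxA => /eqP; rewrite subr_eq0 => /eqP.
Qed.

Lemma ginv13_exists : exists G, is_ginv X G [:: 1; 3]%N.
Proof.
set S := ctrmx X *m X.
have [N XNS] : exists N, X *m N *m S = X.
  by exists (pinvmx S); exact: mul_pinv_gram.
have S_herm : ctrmx S = S by rewrite /S ctrmx_mul ctrmxK.
exists (N *m ctrmx X) => i; rewrite !inE => /orP[]/eqP->/=.
  by rewrite !mulmxA -(mulmxA _ (ctrmx X) X) -/S XNS.
have Xct : ctrmx X = S *m ctrmx N *m ctrmx X.
  by rewrite -{1}XNS ctrmx_mul S_herm ctrmx_mul mulmxA.
by clearbody S; rewrite !ctrmx_mul ctrmxK {2}Xct !mulmxA XNS.
Qed.

Lemma row_free_ginv1 (G : 'M[R]_(q, p)) :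
  row_free X -> X *m G *m X = X -> X *m G = 1%:M.
Proof.
move=> fX h1; apply/eqP; rewrite -subr_eq0 -(mulmx_free_eq0 _ fX).
by rewrite mulmxBl mul1mx h1 subrr.
Qed.

Lemma ginv124_shift (G0 Z : 'M[R]_(q, p)) :
  is_ginv X G0 [:: 1; 2; 4]%N ->
  let G := G0 + G0 *m X *m Z *m (1%:M - X *m G0) in
  is_ginv X G [:: 1; 2; 4]%N /\
  X *m G = X *m G0 + X *m Z *m (1%:M - X *m G0).
Proof.
move=> hG0 G.
have h1 : X *m G0 *m X = X := hG0 1%N isT.
have h2 : G0 *m X *m G0 = G0 := hG0 2%N isT.
have h4 : ctrmx (G0 *m X) = G0 *m X := hG0 4%N isT.
have YX0 : (1%:M - X *m G0) *m X = 0 by rewrite mulmxBl mul1mx h1 subrr.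
have GX : G *m X = G0 *m X by rewrite /G mulmxDl -mulmxA YX0 mulmx0 addr0.
split; last by rewrite /G mulmxDr !mulmxA h1.
move=> i; rewrite !inE => /or3P[]/eqP->.
- by rewrite /= -mulmxA GX mulmxA h1.
- by rewrite /= GX /G mulmxDr !mulmxA h2.
- by rewrite /= GX.
Qed.

End GeneralizedInverses.

(* Urquhart: G4 X G3 is the Moore-Penrose inverse when G3 is a {1,3}- and G4
   a {1,4}-inverse; the adjoint of a {1,3}-inverse of X^* is a {1,4}-inverse. *)
Lemma MP_exists (R : numClosedFieldType) p q (X : 'M[R]_(p, q)) :
  exists G, is_MP X G.
Proof.
have [G3 hG3] := ginv13_exists X.
have [G' hG'] := ginv13_exists (ctrmx X).
have h31 : X *m G3 *m X = X := hG3 1%N isT.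
have h33 : ctrmx (X *m G3) = X *m G3 := hG3 3%N isT.
set G4 := ctrmx G'.
have h41 : X *m G4 *m X = X.
  have := congr1 (@ctrmx _ _ _) (hG' 1%N isT).
  by rewrite !ctrmx_mul !ctrmxK mulmxA.
have h44 : ctrmx (G4 *m X) = G4 *m X.
  by rewrite ctrmx_mul ctrmxK /G4 -(hG' 3%N isT) ctrmx_mul ctrmxK.
have h31r r (Y : 'M[R]_(r, p)) : Y *m X *m G3 *m X = Y *m X.
  by rewrite -!(mulmxA Y) h31.
have h41r r (Y : 'M[R]_(r, p)) : Y *m X *m G4 *m X = Y *m X.
  by rewrite -!(mulmxA Y) h41.
exists (G4 *m X *m G3) => i; rewrite !inE => /or4P[]/eqP->/=; rewrite ?mulmxA.
- by rewrite h41 h31.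
- by rewrite h31r h41r.
- by rewrite h41 h33.
- by rewrite h31r h44.
Qed.

Section GinvFixingAdjoint.
Variables (R : numClosedFieldType) (p q r : nat).
Variables (X : 'M[R]_(p, q)) (V : 'M[R]_(p, r)).

Lemma ginv13_fixes_adjointE (G : 'M[R]_(q, p)) :
  X *m G *m X = X -> ctrmx (X *m G) = X *m G ->
  ctrmx V *m (X *m G) = ctrmx V <-> (V^T <= X^T)%MS.
Proof.
move=> h1 h3; split=> [|/submxP[D VD]].
  move=> /(congr1 (@ctrmx _ _ _)); rewrite ctrmx_mul ctrmxK h3 => <-.
  by rewrite !trmx_mul mulmxA; apply: submxMl.
have -> : V = X *m D^T by rewrite -[V]trmxK VD trmx_mul trmxK.
by rewrite ctrmx_mul -mulmxA -{1}h3 -ctrmx_mul h1.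
Qed.

Lemma ginv124_not_fixes_adjoint :
  ctrmx V *m X != 0 -> (\rank X < p)%N ->
  exists G, is_ginv X G [:: 1; 2; 4]%N /\ ctrmx V *m (X *m G) != ctrmx V.
Proof.
move=> VX0 rX; have [G0 MP0] := MP_exists X.
have hG0 : is_ginv X G0 [:: 1; 2; 4]%N by apply: is_ginv_sub MP0; apply/allP.
case: (eqVneq (ctrmx V *m (X *m G0)) (ctrmx V)) => fixG0; last by exists G0.
have nzY : 1%:M - X *m G0 != 0.
  apply: contraTneq rX => /eqP; rewrite subr_eq0 => /eqP XG0; rewrite -leqNgt.
  by have := mxrankM_maxl X G0; rewrite -XG0 mxrank1.
have [Z VXZY] := exists_mulmx_neq0 VX0 nzY.
have [hG XG] := ginv124_shift Z hG0.
eexists; split; first exact: hG.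
by rewrite XG mulmxDr fixG0 -subr_eq0 addrC addKr !mulmxA.
Qed.

Lemma all_ginv1_fixes_adjointE (tau : seq nat) :
  (ctrmx V *m X = 0 -> V = 0) ->
  (1 \in tau)%N -> {subset tau <= [:: 1; 2; 4]%N} ->
  (forall G, is_ginv X G tau -> ctrmx V *m (X *m G) = ctrmx V) <->
  (V = 0 \/ \rank X = p).
Proof.
move=> V_inj t1 t124; split=> [fixes | VX G hG]; last first.
  case: VX => [-> | rX]; first by rewrite ctrmx0 mul0mx.
  by rewrite (row_free_ginv1 _ (hG 1%N t1)) ?mulmx1 // /row_free rX.
case: (eqVneq V 0) => [|nzV]; [by left | right].
apply/eqP; rewrite eqn_leq rank_leq_row leqNgt; apply/negP => rX.
have VX0 : ctrmx V *m X != 0 by apply: contra nzV => /eqP/V_inj ->.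
have [G [hG nfix]] := ginv124_not_fixes_adjoint VX0 rX.
by move/eqP: nfix; apply; apply: fixes; exact: is_ginv_sub t124 hG.
Qed.

Lemma all_ginv13_fixes_adjointE (tau : seq nat) :
  (1 \in tau)%N -> (3 \in tau)%N -> {subset tau <= [:: 1; 2; 3; 4]%N} ->
  (forall G, is_ginv X G tau -> ctrmx V *m (X *m G) = ctrmx V) <->
  (V^T <= X^T)%MS.
Proof.
move=> t1 t3 t1234; have [Xd MPX] := MP_exists X; split=> [fixes | VX G hG].
  apply/(ginv13_fixes_adjointE (MPX 1%N isT) (MPX 3%N isT)).
  exact/fixes/(is_ginv_sub t1234 MPX).
exact/(ginv13_fixes_adjointE (hG 1%N t1) (hG 3%N t3)).
Qed.

Lemma some_ginv13_fixes_adjointE (tau : seq nat) :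
  (1 \in tau)%N -> (3 \in tau)%N -> {subset tau <= [:: 1; 2; 3; 4]%N} ->
  (exists G, is_ginv X G tau /\ ctrmx V *m (X *m G) = ctrmx V) <->
  (V^T <= X^T)%MS.
Proof.
move=> t1 t3 t1234; split=> [[G [hG fixG]] | VX].
  exact/(ginv13_fixes_adjointE (hG 1%N t1) (hG 3%N t3)).
have [Xd MPX] := MP_exists X; exists Xd.
split; first exact: is_ginv_sub t1234 MPX.
exact/(ginv13_fixes_adjointE (MPX 1%N isT) (MPX 3%N isT)).
Qed.

End GinvFixingAdjoint.

Section UnitFactors.
Variables (R : numClosedFieldType) (m n : nat).

Lemma unitmx_mul_eq0 r (U : 'M[R]_m) (X : 'M[R]_(m, r)) :
  U \in unitmx -> (U *m X = 0) <-> (X = 0).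
Proof.
by move=> hU; split=> [UX0|->]; rewrite ?mulmx0 // -[X](mulKmx hU) UX0 mulmx0.
Qed.

Lemma colspace_eq_unitl_sub (U : 'M[R]_m) (X : 'M[R]_(m, n)) :
  U \in unitmx -> colspace_eq (U *m X) X <-> ((U *m X)^T <= X^T)%MS.
Proof.
move=> hU; have rUX : \rank (U *m X)^T = \rank X^T.
  by rewrite trmx_mul mxrankMfree // row_free_unit unitmx_tr.
split=> [/andP[] // | sUX]; apply/andP; split=> //.
by have := mxrank_leqif_sup sUX; rewrite rUX => /leqif_refl.
Qed.

Lemma colspace_eq_unitl_sup (U : 'M[R]_m) (X : 'M[R]_(m, n)) :
  U \in unitmx -> colspace_eq (U *m X) X <-> (X^T <= (U *m X)^T)%MS.
Proof.
move=> hU; have rUX : \rank X^T = \rank (U *m X)^T.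
  by rewrite trmx_mul mxrankMfree // row_free_unit unitmx_tr.
split=> [/andP[] // | sXU]; apply/andP; split=> //.
by have := mxrank_leqif_sup sXU; rewrite rUX => /leqif_refl.
Qed.

Variables (A : 'M[R]_m) (C : 'M[R]_n) (B : 'M[R]_(m, n)).
Hypotheses (hA : A \in unitmx) (hC : C \in unitmx).
Local Notation M := (A *m B *m C).

Lemma rank_unit_mul : \rank M = \rank B.
Proof. by rewrite mxrankMfree ?row_free_unit // eqmxMfull ?row_full_unit. Qed.

Lemma gram_M_ginvE (G : 'M[R]_(n, m)) :
  ctrmx M *m M *m invmx C *m G *m invmx A = ctrmx M <->
  ctrmx (ctrmx A *m A *m B) *m (B *m G) = ctrmx (ctrmx A *m A *m B).
Proof.
set V := ctrmx A *m A *m B.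
have -> : ctrmx M *m M *m invmx C *m G *m invmx A
    = ctrmx C *m (ctrmx V *m (B *m G)) *m invmx A.
  by rewrite /V !ctrmx_mul ctrmxK !mulmxA mulmxK.
have -> : ctrmx M = ctrmx C *m ctrmx V *m invmx A.
  by rewrite /V !ctrmx_mul ctrmxK !mulmxA mulmxK.
by rewrite mulmx_unitr_eq ?unitmx_inv // mulmx_unitl_eq // unitmx_ctrmx.
Qed.

Lemma gram_B_ginvE (H : 'M[R]_(n, m)) :
  ctrmx B *m B *m C *m H *m A = ctrmx B <->
  ctrmx (invmx (ctrmx A) *m B) *m (M *m H) = ctrmx (invmx (ctrmx A) *m B).
Proof.
rewrite ctrmx_mul ctrmx_inv ctrmxK.
transitivity (ctrmx B *m invmx A *m (M *m H) *m A = ctrmx B *m invmx A *m A).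
  by rewrite !mulmxA mulmxKV // mulmxKV.
exact: mulmx_unitr_eq.
Qed.

Lemma weighted_adjoint_inj :
  ctrmx (ctrmx A *m A *m B) *m B = 0 -> ctrmx A *m A *m B = 0.
Proof.
move=> h; have : ctrmx (A *m B) *m (A *m B) = 0.
  by rewrite -h !ctrmx_mul ctrmxK !mulmxA.
by move/gram_mx_eq0; rewrite -mulmxA => ->; rewrite mulmx0.
Qed.

Lemma inv_adjoint_inj :
  ctrmx (invmx (ctrmx A) *m B) *m M = 0 -> invmx (ctrmx A) *m B = 0.
Proof.
move=> h; suff -> : B = 0 by rewrite mulmx0.
apply: gram_mx_eq0; apply/(mulmx_unitr_eq _ _ hC).
by rewrite mul0mx -h ctrmx_mul ctrmx_inv ctrmxK !mulmxA mulmxKV.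
Qed.

Lemma inv_adjoint_rangeE :
  ((invmx (ctrmx A) *m B)^T <= M^T)%MS = (B^T <= (ctrmx A *m A *m B)^T)%MS.
Proof.
have fC : row_full C^T by rewrite row_full_unit unitmx_tr.
have fA : row_free (ctrmx A)^T by rewrite row_free_unit unitmx_tr unitmx_ctrmx.
rewrite (trmx_mul (A *m B) C) (eqmxMfull _ fC) -(submxMfree _ _ fA) -!trmx_mul.
by rewrite !mulmxA mulmxV ?unitmx_ctrmx // mul1mx.
Qed.

End UnitFactors.

Lemma weighted_ginv124_exists (R : numClosedFieldType) m n
    (A : 'M[R]_m) (B : 'M[R]_(m, n)) : A \in unitmx ->
  exists G, is_ginv B G [:: 1; 2; 4]%N /\
    ctrmx (ctrmx A *m A *m B) *m (B *m G) = ctrmx (ctrmx A *m A *m B).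
Proof.
move=> hA; have [K ->] : exists K, B = invmx A *m K.
  by exists (A *m B); rewrite mulKmx.
have [Kd MPK] := MP_exists K.
have k1 r (Y : 'M[R]_(r, m)) : Y *m K *m Kd *m K = Y *m K.
  by rewrite -!(mulmxA Y) (MPK 1%N isT).
have k2 : Kd *m K *m Kd = Kd := MPK 2%N isT.
have k4 : ctrmx (Kd *m K) = Kd *m K := MPK 4%N isT.
have k3 : ctrmx K *m K *m Kd = ctrmx K.
  by rewrite -mulmxA -(MPK 3%N isT) -ctrmx_mul (MPK 1%N isT).
exists (Kd *m A); split.
  move=> i; rewrite !inE => /or3P[]/eqP->/=;
    by rewrite !mulmxA mulmxK // ?k1 ?k2 ?k4.
by rewrite !mulmxA mulmxK // ctrmx_mul ctrmxK mulmxK // k3.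
Qed.

Theorem lemma4p1 (R : numClosedFieldType) (m n : nat)
  (A : 'M[R]_m) (C : 'M[R]_n) (B : 'M[R]_(m, n)) (M : 'M[R]_(m, n))
  (hA : A \in unitmx) (hC : C \in unitmx) (hM : M = A *m B *m C) :
  let T1 := [:: [:: 1]; [:: 1; 2]; [:: 1; 4]; [:: 1; 2; 4]]%N in
  let T3 := [:: [:: 1; 3]; [:: 1; 2; 3]; [:: 1; 3; 4]]%N in
  let P (G : 'M[R]_(n, m)) :=
    ctrmx M *m M *m invmx C *m G *m invmx A = ctrmx M in
  let Q (H : 'M[R]_(n, m)) :=
    ctrmx B *m B *m C *m H *m A = ctrmx B in
  let rangeEq := colspace_eq (ctrmx A *m A *m B) B in
  (* (e) *)
  (forall tau, tau \in T1 -> exists G, is_ginv B G tau /\ P G) /\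
  (* (f) *)
  (forall tau, tau \in T1 ->
     ((forall G, is_ginv B G tau -> P G) <-> (B = 0 \/ \rank B = m))) /\
  (* (g) *)
  (forall tau, tau \in T3 ->
     ((forall G, is_ginv B G tau -> P G) <-> rangeEq) /\
     ((exists G, is_ginv B G tau /\ P G) <-> rangeEq)) /\
  (forall G, is_MP B G -> (P G <-> rangeEq)) /\
  (* (h) *)
  (forall tau, tau \in T1 ->
     ((forall H, is_ginv M H tau -> Q H) <-> (B = 0 \/ \rank B = m))) /\
  (* (i) *)
  (forall tau, tau \in T3 ->
     ((forall H, is_ginv M H tau -> Q H) <-> rangeEq)) /\
  (forall H, is_MP M H -> (Q H <-> rangeEq)).
Proof.
move=> T1 T3 P Q rangeEq; subst M.
set VP := ctrmx A *m A *m B; set VQ := invmx (ctrmx A) *m B.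
have hP G : P G <-> ctrmx VP *m (B *m G) = ctrmx VP by exact: gram_M_ginvE.
have hQ H : Q H <-> ctrmx VQ *m (A *m B *m C *m H) = ctrmx VQ.
  exact: gram_B_ginvE.
have hW : ctrmx A *m A \in unitmx by rewrite unitmx_mul unitmx_ctrmx hA.
have rangeP : rangeEq <-> (VP^T <= B^T)%MS by exact: colspace_eq_unitl_sub.
have rangeQ : rangeEq <-> (VQ^T <= (A *m B *m C)^T)%MS.
  by rewrite inv_adjoint_rangeE //; exact: colspace_eq_unitl_sup.
have zeroP : VP = 0 <-> B = 0 by exact: unitmx_mul_eq0.
have zeroQ : VQ = 0 <-> B = 0.
  by apply: unitmx_mul_eq0; rewrite unitmx_inv unitmx_ctrmx.
have T1E tau : tau \in T1 -> (1 \in tau)%N /\ {subset tau <= [:: 1; 2; 4]%N}.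
  by rewrite !inE => /or4P[]/eqP->; split=> //; apply/allP.
have T3E tau : tau \in T3 ->
    [/\ (1 \in tau)%N, (3 \in tau)%N & {subset tau <= [:: 1; 2; 3; 4]%N}].
  by rewrite !inE => /or3P[]/eqP->; split=> //; apply/allP.
split.
  move=> tau /T1E[_ t124]; have [G [hG fixG]] := weighted_ginv124_exists B hA.
  by exists G; split; [exact: is_ginv_sub t124 hG | exact/hP].
split.
  move=> tau /T1E[t1 t124]; setoid_rewrite hP; rewrite -zeroP.
  exact: all_ginv1_fixes_adjointE (@weighted_adjoint_inj _ _ _ A B) t1 t124.
split.
  move=> tau /T3E[t1 t3 t1234]; setoid_rewrite hP; rewrite rangeP.
  split; first exact: all_ginv13_fixes_adjointE.
  exact: some_ginv13_fixes_adjointE.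
split.
  move=> G MPG; rewrite hP rangeP.
  exact: ginv13_fixes_adjointE (MPG 1%N isT) (MPG 3%N isT).
split.
  move=> tau /T1E[t1 t124]; setoid_rewrite hQ.
  rewrite -zeroQ -(rank_unit_mul B hA hC).
  exact: all_ginv1_fixes_adjointE (inv_adjoint_inj hA hC) t1 t124.
split.
  move=> tau /T3E[t1 t3 t1234]; setoid_rewrite hQ; rewrite rangeQ.
  exact: all_ginv13_fixes_adjointE.
move=> H MPH; rewrite hQ rangeQ.
exact: ginv13_fixes_adjointE (MPH 1%N isT) (MPH 3%N isT).
Qed.
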